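(* Let $n\ge3$ and let $S=(s_{ij})$ be an $n\times n$ magic square, with $x_{ij}=j-\frac{n-1}{2}$, $y_{ij}=\frac{n-1}{2}-i$, $z_{ij}=s_{ij}-\frac{n^2+1}{2}$. Then the covariance matrix of $(X,Y,Z)$ has the form \[ \Sigma=\begin{pmatrix}\mathrm{Var}(X)&\mathrm{Cov}(X,Y)&0\\ \mathrm{Cov}(X,Y)&\mathrm{Var}(Y)&0\\ 0&0&\mathrm{Var}(Z)\end{pmatrix}; \] in particular $Z$ is uncorrelated with both $X$ and $Y$.
   Context: A magic square of order $n$ is an arrangement of $1,\dots,n^2$ (each used once) in an $n\times n$ grid such that every row, every column, and both main diagonals sum to $n(n^2+1)/2$. $X,Y,Z$ are the functions $(i,j)\mapsto x_{ij},y_{ij},z_{ij}$ regarded as random variables under the uniform distribution on the $n^2$ cells; $\mathrm{Var}$ and $\mathrm{Cov}$ are the corresponding population variance and covariance (normalized by $1/n^2$). *)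

From mathcomp Require Import all_boot all_order all_algebra.
Set Implicit Arguments. Unset Strict Implicit. Unset Printing Implicit Defensive.
Import Order.TTheory GRing.Theory Num.Theory.
Local Open Scope ring_scope.

Definition magic_square (n : nat) (s : 'I_n -> 'I_n -> nat) : Prop :=
  [/\ (forall i j, 1 <= s i j <= n ^ 2)%N,
      (forall i j k l, s i j = s k l -> i = k /\ j = l) &
     [/\
      (forall i, \sum_(j < n) s i j = n * (n ^ 2 + 1) %/ 2)%N,
      (forall j, \sum_(i < n) s i j = n * (n ^ 2 + 1) %/ 2)%N,
      (\sum_(i < n) s i i = n * (n ^ 2 + 1) %/ 2)%N &
      (\sum_(i < n) s i (rev_ord i) = n * (n ^ 2 + 1) %/ 2)%N]].

(* expectation under the uniform distribution on the n^2 cells *)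
Definition cell_mean {R : realFieldType} (n : nat) (f : 'I_n -> 'I_n -> R) : R :=
  (n ^ 2)%:R^-1 * \sum_(i < n) \sum_(j < n) f i j.

Definition cell_cov {R : realFieldType} (n : nat) (f g : 'I_n -> 'I_n -> R) : R :=
  cell_mean (fun i j => (f i j - cell_mean f) * (g i j - cell_mean g)).

Definition cell_var {R : realFieldType} (n : nat) (f : 'I_n -> 'I_n -> R) : R :=
  cell_cov f f.

Definition cov_matrix3 {R : realFieldType} (n : nat)
  (X Y Z : 'I_n -> 'I_n -> R) : 'M[R]_3 :=
  \matrix_(a < 3, b < 3)
    cell_cov (match nat_of_ord a with 0 => X | 1 => Y | _ => Z end)%N
             (match nat_of_ord b with 0 => X | 1 => Y | _ => Z end)%N.

Definition Xc {R : realFieldType} (n : nat) (i j : 'I_n) : R :=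
  (j : nat)%:R - ((n : nat)%:R - 1) / 2.
Definition Yc {R : realFieldType} (n : nat) (i j : 'I_n) : R :=
  ((n : nat)%:R - 1) / 2 - (i : nat)%:R.
Definition Zc {R : realFieldType} (n : nat) (s : 'I_n -> 'I_n -> nat) (i j : 'I_n) : R :=
  (s i j)%:R - ((n ^ 2)%N%:R + 1) / 2.

From mathcomp Require Import all_boot all_order all_algebra.
Import Order.TTheory GRing.Theory Num.Theory.
From mathcomp Require Import ring.
Set Implicit Arguments. Unset Strict Implicit. Unset Printing Implicit Defensive.
Local Open Scope ring_scope.

(* Every row and every column of Z sums to zero, while X depends only on the
   column and Y only on the row.  Hence Cov(X, Z) = n^-2 sum_j x_j sum_i z_ij
   = 0, and likewise Cov(Y, Z) = 0. *)

Section CellMoments.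
Variables (R : realFieldType) (n : nat).
Implicit Types f g : 'I_n -> 'I_n -> R.

Lemma cell_covC f g : cell_cov f g = cell_cov g f.
Proof.
rewrite /cell_cov /cell_mean; congr (_ * _).
by apply: eq_bigr => i _; apply: eq_bigr => j _; rewrite mulrC.
Qed.

Lemma cell_mean_tr f : cell_mean (fun i j => f j i) = cell_mean f.
Proof. by rewrite /cell_mean exchange_big. Qed.

Lemma cell_cov_tr f g :
  cell_cov (fun i j => f j i) (fun i j => g j i) = cell_cov f g.
Proof.
rewrite /cell_cov -[in RHS]cell_mean_tr -[cell_mean f]cell_mean_tr.
by rewrite -[cell_mean g]cell_mean_tr.
Qed.

Lemma cell_mean_row_sum0 g :
  (forall i, \sum_(j < n) g i j = 0) -> cell_mean g = 0.
Proof. by move=> g0; rewrite /cell_mean big1 ?mulr0. Qed.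

Lemma cell_cov_row_sum0 f g (a : 'I_n -> R) :
  (forall i j, f i j = a i) -> (forall i, \sum_(j < n) g i j = 0) ->
  cell_cov f g = 0.
Proof.
move=> fa g0; rewrite /cell_cov (cell_mean_row_sum0 g0).
apply: cell_mean_row_sum0 => i.
under eq_bigr do rewrite subr0 fa.
by rewrite -mulr_sumr g0 mulr0.
Qed.

Lemma cell_cov_col_sum0 f g (a : 'I_n -> R) :
  (forall i j, f i j = a j) -> (forall j, \sum_(i < n) g i j = 0) ->
  cell_cov f g = 0.
Proof.
move=> fa g0; rewrite -cell_cov_tr.
by apply: (cell_cov_row_sum0 (a := a)) => [i j | i]; [apply: fa | apply: g0].
Qed.

End CellMoments.

Lemma natr_magic_constant (R : realFieldType) (n : nat) :
  ((n * (n ^ 2 + 1) %/ 2)%N%:R : R) = n%:R * ((n ^ 2)%N%:R + 1) / 2.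
Proof.
have even_n_n2S : (2 %| n * (n ^ 2 + 1))%N.
  by rewrite dvdn2 oddM oddD oddX /=; case: (odd n).
have -> : (n%:R * ((n ^ 2)%N%:R + 1) : R) = (n * (n ^ 2 + 1))%N%:R.
  by rewrite natrM natrD.
by rewrite -{2}(divnK even_n_n2S) natrM mulfK ?pnatr_eq0.
Qed.

Lemma sum_centered_magic (R : realFieldType) (n : nat) (F : 'I_n -> nat) :
  (\sum_(k < n) F k = n * (n ^ 2 + 1) %/ 2)%N ->
  \sum_(k < n) ((F k)%:R - ((n ^ 2)%N%:R + 1) / 2) = 0 :> R.
Proof.
move=> sumF; rewrite sumrB -natr_sum sumF natr_magic_constant sumr_const card_ord.
by rewrite -mulr_natl; ring.
Qed.

Section MagicSquare.
Variables (R : realFieldType) (n : nat) (s : 'I_n -> 'I_n -> nat).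
Hypothesis magic_s : magic_square s.

Lemma cov_Xc_Zc : cell_cov (@Xc R n) (@Zc R n s) = 0.
Proof.
case: magic_s => _ _ [_ col_sum _ _].
apply: (cell_cov_col_sum0 (a := fun j : 'I_n => (j : nat)%:R - (n%:R - 1) / 2)) => // j.
exact: sum_centered_magic (col_sum j).
Qed.

Lemma cov_Yc_Zc : cell_cov (@Yc R n) (@Zc R n s) = 0.
Proof.
case: magic_s => _ _ [row_sum _ _ _].
apply: (cell_cov_row_sum0 (a := fun i : 'I_n => (n%:R - 1) / 2 - (i : nat)%:R)) => // i.
exact: sum_centered_magic (row_sum i).
Qed.

End MagicSquare.

Theorem mainTheorem3 (R : realFieldType) (n : nat) (s : 'I_n -> 'I_n -> nat) :
  (3 <= n)%N -> magic_square s ->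
  cov_matrix3 (@Xc R n) (@Yc R n) (@Zc R n s) =
  \matrix_(a < 3, b < 3)
    (match nat_of_ord a, nat_of_ord b with
     | O, O => cell_var (@Xc R n)
     | O, S O => cell_cov (@Xc R n) (@Yc R n)
     | S O, O => cell_cov (@Xc R n) (@Yc R n)
     | S O, S O => cell_var (@Yc R n)
     | S (S O), S (S O) => cell_var (@Zc R n s)
     | _, _ => 0
     end).
Proof.
move=> _ magic_s; apply/matrixP => a b; rewrite !mxE.
have XZ := cov_Xc_Zc R magic_s; have YZ := cov_Yc_Zc R magic_s.
case: a => [[|[|[|a]]] ?] //; case: b => [[|[|[|b]]] ?] //=;
  by rewrite 1?cell_covC ?XZ ?YZ.
Qed.
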